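(* Let $Q$ and $W$ satisfy the standing assumptions with $W=Y$, let $l\ge1$, and assume $Q$ is future unique w.r.t. $I^l_l$. Let $\mathcal R=\{(\zeta,V)\in\hat X^{I^l_l}\times\hat X^{l\triangledown}:V=\{\zeta\}\}$, $\mathcal R^l=\{(x,\hat x)\in X\times\hat X^{I^l_l}:\hat x\in E^{I^l_l}(x)\}$ and $\mathcal R^{l\triangledown}=\{(x,\hat x)\in X\times\hat X^{l\triangledown}:\hat x=E^{I^l_l}(x)\}$. Then: (i) $\mathcal B(\hat Q^{l\triangledown})=\hat{\mathcal B}^l$; (ii) $\mathcal R$ is a simulation relation from $\hat Q^{I^l_l}$ to $\hat Q^{l\triangledown}$ w.r.t. $Y$ and $\mathcal R^{-1}$ is a simulation relation from $\hat Q^{l\triangledown}$ to $\hat Q^{I^l_l}$ w.r.t. $Y$; (iii) $(\mathcal R^l)^{-1}$ is a simulation relation from $\hat Q^{I^l_l}$ to $Q$ w.r.t. $Y$ if and only if $(\mathcal R^{l\triangledown})^{-1}$ is a simulation relation from $\hat Q^{l\triangledown}$ to $Q$ w.r.t. $Y$; (iv) $Q$ is state-based asynchronously $l$-complete w.r.t. $I^l_l$ if and only if $\Phi^{l+1}=\Phi^l$.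
   Context: Strings and signals: $\diamond$ is a symbol not in any other set considered. For a set $A$ and $l\in\mathbb N_0$, $A^l$ is the set of strings of length $l$ over $A$, indexed $\zeta=\zeta(0)\cdots\zeta(l-1)$; $\lambda$ is the empty string and $\cdot$ denotes concatenation. For a map $w$ on $\mathbb Z$ (or a string) and integers $t_1\le t_2$, $w|_{[t_1,t_2]}=w(t_1)\cdots w(t_2)$ is the string of length $t_2-t_1+1$ (absolute time forgotten); if $t_2<t_1$ it is $\lambda$. For a set $\mathcal S$ of such maps or strings, $\mathcal S|_{[t_1,t_2]}=\{s|_{[t_1,t_2]}:s\in\mathcal S\}$. State machines: a state machine is $Q=(X,U,Y,\delta,X_0)$ with $X_0\subseteq X$, $\delta\subseteq X\times U\times Y\times X$. Let $H_\delta(x)=\{y:\exists u,x'.\,(x,u,y,x')\in\delta\}$, $F_\delta(x,u)=\{x':\exists y\in H_\delta(x).\,(x,u,y,x')\in\delta\}$, $T_\delta(x)=\bigcup_{u\in U}F_\delta(x,u)$. The full behavior $\mathcal B_f(Q)$ is the set of $(\mu,\nu,\xi)\in(U\times Y\times X)^{\mathbb N_0}$ with $\xi(0)\in X_0$ and $(\xi(k),\mu(k),\nu(k),\xi(k+1))\in\delta$ for all $k\in\mathbb N_0$. $Q$ is live and reachable if every $x\in X_0$ is $\xi(0)$ for some $(\mu,\nu,\xi)\in\mathcal B_f(Q)$ and every $x\in X$ is $\xi(k)$ for some such trajectory and some $k$. Standing assumptions: $Q=(X,U,Y,\delta,X_0)$ is live and reachable and satisfies $(x,u,y,x')\in\delta\iff(x'\in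 F_\delta(x,u)\wedge y\in H_\delta(x))$ for all $x,x'\in X,u\in U,y\in Y$; the external signal space $W$ is finite and either $W=U\times Y$ or $W=Y$ (here $W=Y$, with $\pi_W(u,y)=\pi_Y(u,y)=y$). Behaviors: for a state machine $Q'$ with input set $U$ and output set $Y$, $\mathcal B(Q')$ is the set of $w:\mathbb Z\to Y\cup\{\diamond\}$ such that for some $(\mu,\nu,\xi)\in\mathcal B_f(Q')$, $w(k)=\diamond$ for $k<0$ and $w(k)=\nu(k)$ for $k\ge0$. $\mathcal B_S(Q)$ is the set of pairs $(w,\xi)$ of maps on $\mathbb Z$ with $w(k)=\xi(k)=\diamond$ for $k<0$ and $(w(k),\xi(k))=(\nu(k),\xi'(k))$ for $k\ge0$, for some $(\mu,\nu,\xi')\in\mathcal B_f(Q)$. For a set $\mathcal B$ of maps on $\mathbb Z$, $\Pi_l(\mathcal B)=\bigcup_{k\in\mathbb N_0}\mathcal B|_{[k-l+1,k]}$. SAlCA: for $l\in\mathbb N_0$, $\hat{\mathcal B}^l$ is the set of $w:\mathbb Z\to W\cup\{\diamond\}$ with $w(k)=\diamond$ for $k<0$, $w(k)\in W$ for $k\ge0$, $w|_{[-l,0]}\in\mathcal B(Q)|_{[-l,0]}$ and $w|_{[k-l,k]}\in\Pi_{l+1}(\mathcal B(Q))$ for all $k\in\mathbb N_0$. Corresponding strings: for integers $a,b$ and $x\in X$, $E^{[a,b]}(x)=\{\zeta:\exists(w,\xi)\in\mathcal B_S(Q),k\in\mathbb N_0:\ \xi(k)=x,\ \zeta=w|_{[k+a,k+b]}\}$.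 For $l,m\in\mathbb N_0$ with $m\le l$, $I^l_m=[m-l,m-1]$; in particular $I^l_l=[0,l-1]$. Future uniqueness: $Q$ is future unique w.r.t. $I^l_m$ if for all $x\in X$ and $\zeta,\zeta'\in E^{I^l_m}(x)$, $\zeta|_{[l-m,l-1]}=\zeta'|_{[l-m,l-1]}$. State-based asynchronous $l$-completeness: $Q$ is state-based asynchronously $l$-complete w.r.t. $I^l_m$ if for all $x\in X$ and $\zeta\in\Pi_{l+1}(\mathcal B(Q))$, $\zeta|_{[0,l-1]}\in E^{I^l_m}(x)$ implies $\zeta\in E^{[m-l,m]}(x)$. Abstract state machine: $\hat Q^{I^l_m}=(\hat X^{I^l_m},U,Y,\hat\delta^{I^l_m},\hat X^{I^l_m}_0)$ with $\hat X^{I^l_m}=\bigcup_{x\in X}E^{I^l_m}(x)$, $\hat X^{I^l_m}_0=\bigcup_{x\in X_0}E^{I^l_m}(x)$, and $(\hat x,u,y,\hat x')\in\hat\delta^{I^l_m}$ iff (1) $\hat x'|_{[0,l-m-1]}=(\hat x|_{[0,l-m-1]}\cdot\pi_W(u,y))|_{[1,l-m]}$, (2) $\hat x|_{[l-m,l-1]}=(\pi_W(u,y)\cdot\hat x'|_{[l-m,l-2]})|_{[0,m-1]}$, and (3) there are $x,x'\in X$ with $\hat x\in E^{I^l_m}(x)$, $\hat x'\in E^{I^l_m}(x')$, $(x,u,y,x')\in\delta$. Quotient state machine (for $W=Y$): $\hat Q^{l\triangledown}=(\hat X^{l\triangledown},U,Y,\hat\delta^{l\triangledown},\hat X^{l\triangledown}_0)$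 with $\hat X^{l\triangledown}=\{E^{I^l_l}(x):x\in X\}$ (a set of subsets of $Y^l$), $\hat X^{l\triangledown}_0=\{E^{I^l_l}(x):x\in X_0\}$, and $(\hat x,u,y,\hat x')\in\hat\delta^{l\triangledown}$ iff there exist $x,x'\in X$ with $\hat x=E^{I^l_l}(x)$, $\hat x'=E^{I^l_l}(x')$ and $(x,u,y,x')\in\delta$. Partitions: for $\Xi\subseteq X$ let $T_\delta^{-1}(\Xi)=\{x\in X:T_\delta(x)\cap\Xi\neq\emptyset\}$ and for $V\subseteq Y$ let $H_\delta^{-1}(V)=\{x\in X:H_\delta(x)=V\}$. Set $\Phi^1=\{H_\delta^{-1}(V):V\subseteq Y\}\setminus\{\emptyset\}$ and, for $l\ge2$, let $\Phi^l$ be the partition of $X$ whose cells are the nonempty sets of the form $\Xi\cap\bigcap_{\Xi'\in\Phi^{l-1}}A_{\Xi'}$ with $\Xi\in\Phi^{l-1}$ and each $A_{\Xi'}\in\{T_\delta^{-1}(\Xi'),\,X\setminus T_\delta^{-1}(\Xi')\}$. Simulation relations: for state machines $Q_i=(X_i,U,Y,\delta_i,X_{0,i})$, $i=1,2$, and $V\in\{U\times Y,Y\}$, a relation $\mathcal R\subseteq X_1\times X_2$ is a simulation relation from $Q_1$ to $Q_2$ w.r.t. $V$ if (a) for every $x_1\in X_{0,1}$ there is $x_2\in X_{0,2}$ with $(x_1,x_2)\in\mathcal R$, and (b) for all $(x_1,x_2)\in\mathcal R$ and $(x_1,u_1,y_1,x_1')\in\delta_1$ there exist $u_2,y_2,x_2'$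 with $(x_2,u_2,y_2,x_2')\in\delta_2$, $(x_1',x_2')\in\mathcal R$ and $\pi_V(u_1,y_1)=\pi_V(u_2,y_2)$. $\mathcal R^{-1}=\{(x_2,x_1):(x_1,x_2)\in\mathcal R\}$. *)

(* State machines with arbitrary state/input types, finite output type Y.
   External signal space W = Y (pi_W(u,y) = y). Diamond is encoded as [None]. *)
From Stdlib Require Import ZArith List.
Open Scope Z_scope.
Set Implicit Arguments.

(* s|_[t1,t2] for a string s (indices from 0); empty if t2 < t1 *)
Definition strR {A : Type} (s : list A) (t1 t2 : Z) : list A :=
  firstn (Z.to_nat (t2 - t1 + 1)) (skipn (Z.to_nat t1) s).

(* w|_[t1,t2] for a map w on Z; empty if t2 < t1 *)
Definition sigR {A : Type} (w : Z -> A) (t1 t2 : Z) : list A :=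
  map (fun i => w (t1 + Z.of_nat i)) (List.seq 0 (Z.to_nat (t2 - t1 + 1))).

Record machine (S U Y : Type) := Machine {
  mstate : S -> Prop;
  minit  : S -> Prop;
  mtrans : S -> U -> Y -> S -> Prop
}.
Arguments Machine {S U Y}.
Arguments mstate {S U Y}.
Arguments minit {S U Y}.
Arguments mtrans {S U Y}.

Definition full_beh {S U Y : Type} (M : machine S U Y)
  (mu : nat -> U) (nu : nat -> Y) (xi : nat -> S) : Prop :=
  minit M (xi O) /\ forall k : nat, mtrans M (xi k) (mu k) (nu k) (xi (Datatypes.S k)).

Definition live_reach {S U Y : Type} (M : machine S U Y) : Prop :=
  (forall x, minit M x -> exists mu nu xi, full_beh M mu nu xi /\ xi O = x) /\
  (forall x, mstate M x -> exists mu nu xi (k : nat), full_beh M mu nu xi /\ xi k = x).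

Definition beh {S U Y : Type} (M : machine S U Y) (w : Z -> option Y) : Prop :=
  exists mu nu xi, full_beh M mu nu xi /\
    (forall k, k < 0 -> w k = None) /\
    (forall k, 0 <= k -> w k = Some (nu (Z.to_nat k))).

Definition Pi {Y : Type} (l : Z) (B : (Z -> option Y) -> Prop) (s : list (option Y)) : Prop :=
  exists w, B w /\ exists k : nat, s = sigR w (Z.of_nat k - l + 1) (Z.of_nat k).

Section Q.
Context {X U Y : Type} (delta : X -> U -> Y -> X -> Prop) (X0 : X -> Prop).

Definition QM : machine X U Y := Machine (fun _ => True) X0 delta.

Definition Hd (x : X) (y : Y) : Prop := exists u x', delta x u y x'.
Definition Fd (x : X) (u : U) (x' : X) : Prop := exists y, Hd x y /\ delta x u y x'.
Definition Td (x x' : X) : Prop := exists u, Fd x u x'.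

Definition standing : Prop :=
  live_reach QM /\
  (forall x u y x', delta x u y x' <-> (Fd x u x' /\ Hd x y)) /\
  (exists ys : list Y, forall y, In y ys).

Definition BS (w : Z -> option Y) (xi : Z -> option X) : Prop :=
  exists mu nu xi', full_beh QM mu nu xi' /\
    (forall k, k < 0 -> w k = None /\ xi k = None) /\
    (forall k, 0 <= k -> w k = Some (nu (Z.to_nat k)) /\ xi k = Some (xi' (Z.to_nat k))).

Definition E (a b : Z) (x : X) (s : list (option Y)) : Prop :=
  exists w xi, BS w xi /\ exists k : nat,
    xi (Z.of_nat k) = Some x /\ s = sigR w (Z.of_nat k + a) (Z.of_nat k + b).

(* E^{I^l_m}(x), with I^l_m = [m-l, m-1] *)
Definition EI (l m : nat) (x : X) : list (option Y) -> Prop :=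
  E (Z.of_nat m - Z.of_nat l) (Z.of_nat m - 1) x.

Definition future_unique (l m : nat) : Prop :=
  forall x s s', EI l m x s -> EI l m x s' ->
    strR s (Z.of_nat l - Z.of_nat m) (Z.of_nat l - 1) =
    strR s' (Z.of_nat l - Z.of_nat m) (Z.of_nat l - 1).

Definition sb_async_complete (l m : nat) : Prop :=
  forall x s, Pi (Z.of_nat l + 1) (beh QM) s ->
    EI l m x (strR s 0 (Z.of_nat l - 1)) ->
    E (Z.of_nat m - Z.of_nat l) (Z.of_nat m) x s.

Definition SAlCA (l : nat) (w : Z -> option Y) : Prop :=
  (forall k, k < 0 -> w k = None) /\
  (forall k, 0 <= k -> exists y, w k = Some y) /\
  (exists w', beh QM w' /\ sigR w (- Z.of_nat l) 0 = sigR w' (- Z.of_nat l) 0) /\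
  (forall k : nat, Pi (Z.of_nat l + 1) (beh QM)
                      (sigR w (Z.of_nat k - Z.of_nat l) (Z.of_nat k))).

Definition hstate (l m : nat) (s : list (option Y)) : Prop := exists x, EI l m x s.
Definition hinit (l m : nat) (s : list (option Y)) : Prop := exists x, X0 x /\ EI l m x s.
Definition htrans (l m : nat) (s : list (option Y)) (u : U) (y : Y) (s' : list (option Y)) : Prop :=
  let L := Z.of_nat l in let M := Z.of_nat m in
  strR s' 0 (L - M - 1) = strR (strR s 0 (L - M - 1) ++ Some y :: nil) 1 (L - M) /\
  strR s (L - M) (L - 1) = strR (Some y :: strR s' (L - M) (L - 2)) 0 (M - 1) /\
  exists x x', EI l m x s /\ EI l m x' s' /\ delta x u y x'.
Definition hatQ (l m : nat) : machine (list (option Y)) U Y :=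
  Machine (hstate l m) (hinit l m) (htrans l m).

Definition qstate (l : nat) (V : list (option Y) -> Prop) : Prop := exists x, V = EI l l x.
Definition qinit (l : nat) (V : list (option Y) -> Prop) : Prop := exists x, X0 x /\ V = EI l l x.
Definition qtrans (l : nat) (V : list (option Y) -> Prop) (u : U) (y : Y)
  (V' : list (option Y) -> Prop) : Prop :=
  exists x x', V = EI l l x /\ V' = EI l l x' /\ delta x u y x'.
Definition quotQ (l : nat) : machine (list (option Y) -> Prop) U Y :=
  Machine (qstate l) (qinit l) (qtrans l).

Definition Rrel (l : nat) (s : list (option Y)) (V : list (option Y) -> Prop) : Prop :=
  hstate l l s /\ qstate l V /\ V = (fun s' => s' = s).
Definition Rl (l : nat) (x : X) (s : list (option Y)) : Prop :=
  hstate l l s /\ EI l l x s.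
Definition Rq (l : nat) (x : X) (V : list (option Y) -> Prop) : Prop :=
  qstate l V /\ V = EI l l x.

(* partitions Phi^l; sets of states are predicates, families are taken up to
   extensional equality of their members *)
Definition Tinv (Xi : X -> Prop) (x : X) : Prop := exists x', Td x x' /\ Xi x'.

(* PhiS n = Phi^(n+1) *)
Fixpoint PhiS (n : nat) : (X -> Prop) -> Prop :=
  match n with
  | O => fun Xi => (exists x, Xi x) /\
           exists V : Y -> Prop, forall x, Xi x <-> (forall y, Hd x y <-> V y)
  | Datatypes.S n' => fun Xi => (exists x, Xi x) /\
           exists Xi0, PhiS n' Xi0 /\
           exists c : (X -> Prop) -> bool, forall x,
             Xi x <-> (Xi0 x /\ forall Xi', PhiS n' Xi' ->
                                  if c Xi' then Tinv Xi' x else ~ Tinv Xi' x)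
  end.

Definition Phi (l : nat) : (X -> Prop) -> Prop := PhiS (Nat.pred l).


End Q.

Definition sim {S1 S2 U Y : Type} (M1 : machine S1 U Y) (M2 : machine S2 U Y)
  (R : S1 -> S2 -> Prop) : Prop :=
  (forall x1, minit M1 x1 -> exists x2, minit M2 x2 /\ R x1 x2) /\
  (forall x1 x2, R x1 x2 -> forall u1 y1 x1', mtrans M1 x1 u1 y1 x1' ->
     exists u2 y2 x2', mtrans M2 x2 u2 y2 x2' /\ R x1' x2' /\ y1 = y2).

From Pilot Require Import Defs.
From Stdlib Require Import ZArith List Lia.
From Stdlib Require Import ClassicalEpsilon FunctionalExtensionality PropExtensionality.

(* Liveness and reachability make E^{[0,b]}(x) the set of output words of length b+1 of the
   runs starting in x. Future uniqueness says that all runs from x share their first l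
   outputs, the l-future of x, so E^{I^l_l}(x) is the singleton of that word. Hence the
   states of both abstractions are just l-futures: this gives (ii), and (iii) follows by
   composing simulations through (ii). Along a run of the quotient machine each output is the
   first letter of the l-future of the current state, so its behaviours are exactly the
   signals all of whose (l+1)-windows are windows of B(Q), which is (i). Finally, for n < l
   two states lie in the same cell of Phi^{n+1} iff their runs agree on the first n+1
   outputs; so Phi^{l+1} = Phi^l says that states with the same l-future have successors
   realising the same l-futures, and this is exactly state-based asynchronous
   l-completeness (iv). *)

Section Sequences.
Context {A : Type}.

Definition tabulate (f : nat -> A) (n : nat) : list A := map f (seq 0 n).

Lemma nth_tabulate f n i d : (i < n)%nat -> nth i (tabulate f n) d = f i.
Proof.
  intro Hi. unfold tabulate.
  rewrite nth_indep with (d' := f 0%nat) by (rewrite length_map, length_seq; lia).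
  rewrite map_nth, seq_nth by lia. reflexivity.
Qed.

Lemma tabulate_ext f g n :
  (forall i, (i < n)%nat -> f i = g i) -> tabulate f n = tabulate g n.
Proof. intro H. apply map_ext_in. intros i Hi. apply in_seq in Hi. apply H. lia. Qed.

Lemma tabulate_inj f g n :
  tabulate f n = tabulate g n -> forall i, (i < n)%nat -> f i = g i.
Proof.
  intros H i Hi.
  rewrite <- (nth_tabulate f n i (f 0%nat)), <- (nth_tabulate g n i (f 0%nat)) by exact Hi.
  rewrite H. reflexivity.
Qed.

Lemma tabulate_succ f n : tabulate f (S n) = f 0%nat :: tabulate (fun i => f (S i)) n.
Proof. unfold tabulate. simpl. rewrite <- seq_shift, map_map. reflexivity. Qed.

Lemma hd_tabulate f n d : (1 <= n)%nat -> hd d (tabulate f n) = f 0%nat.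
Proof. intro Hn. destruct n as [|n]; [lia|]. rewrite tabulate_succ. reflexivity. Qed.

Lemma hd_firstn (s : list A) n d : (1 <= n)%nat -> hd d (firstn n s) = hd d s.
Proof. intro Hn. destruct n as [|n]; [lia|]. destruct s; reflexivity. Qed.

Lemma firstn_tabulate f k n : (k <= n)%nat -> firstn k (tabulate f n) = tabulate f k.
Proof.
  revert f n. induction k as [|k IH]; intros f n Hk; [reflexivity|].
  destruct n as [|n]; [lia|].
  rewrite !tabulate_succ. simpl. rewrite IH by lia. reflexivity.
Qed.

Lemma tabulate_shift f n :
  (1 <= n)%nat -> tabulate f n = f 0%nat :: firstn (n - 1) (tabulate (fun i => f (S i)) n).
Proof.
  intro Hn. destruct n as [|m]; [lia|].
  rewrite tabulate_succ, firstn_tabulate by lia. do 2 f_equal. lia.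
Qed.

Lemma sigR_window (w : Z -> A) (k : Z) (n : nat) :
  sigR w (k - Z.of_nat n) k = tabulate (fun i => w (k - Z.of_nat n + Z.of_nat i)%Z) (S n).
Proof.
  unfold sigR, tabulate. replace (k - (k - Z.of_nat n) + 1)%Z with (Z.of_nat (S n)) by lia.
  rewrite Nat2Z.id. reflexivity.
Qed.

Lemma strR_0 (s : list A) (b : Z) : strR s 0 b = firstn (Z.to_nat (b + 1)) s.
Proof. unfold strR. simpl. do 2 f_equal. lia. Qed.

Definition signal (f : nat -> A) : Z -> option A :=
  fun t => if (t <? 0)%Z then None else Some (f (Z.to_nat t)).

Lemma signal_neg f t : (t < 0)%Z -> signal f t = None.
Proof. intro Ht. unfold signal. destruct (Z.ltb_spec t 0); [reflexivity|lia]. Qed.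

Lemma signal_nonneg f t : (0 <= t)%Z -> signal f t = Some (f (Z.to_nat t)).
Proof. intro Ht. unfold signal. destruct (Z.ltb_spec t 0); [lia|reflexivity]. Qed.

Lemma signal_nat f (k : nat) : signal f (Z.of_nat k) = Some (f k).
Proof. rewrite signal_nonneg, Nat2Z.id by lia. reflexivity. Qed.

Definition scons (a : A) (f : nat -> A) : nat -> A :=
  fun i => match i with O => a | S j => f j end.

End Sequences.

Section Simulation.
Context {S1 S2 S3 U Y : Type} (M1 : machine S1 U Y) (M2 : machine S2 U Y) (M3 : machine S3 U Y).

Lemma sim_comp R1 R2 : sim M1 M2 R1 -> sim M2 M3 R2 -> sim M1 M3 (fun a c => exists b, R1 a b /\ R2 b c).
Proof.
  intros [init1 step1] [init2 step2]. split.
  - intros a Ha. destruct (init1 a Ha) as (b & Hb & Rab). destruct (init2 b Hb) as (c & Hc & Rbc). eauto.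
  - intros a c (b & Rab & Rbc) u y a' Ha.
    destruct (step1 a b Rab u y a' Ha) as (u' & y' & b' & Hb & Rab' & <-).
    destruct (step2 b c Rbc u' y b' Hb) as (u'' & y'' & c' & Hc & Rbc' & <-).
    exists u'', y, c'. split; [exact Hc|split; [eauto|reflexivity]].
Qed.

Lemma sim_rel_ext (R R' : S1 -> S2 -> Prop) :
  (forall a b, R a b <-> R' a b) -> sim M1 M2 R -> sim M1 M2 R'.
Proof.
  intros HR [init step]. split.
  - intros a Ha. destruct (init a Ha) as (b & Hb & Rab). exists b. split; [exact Hb|apply HR, Rab].
  - intros a b Rab u y a' Ha.
    destruct (step a b (proj2 (HR a b) Rab) u y a' Ha) as (u' & y' & b' & Hb & Rab' & Hy).
    exists u', y', b'. split; [exact Hb|split; [apply HR, Rab'|exact Hy]].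
Qed.

End Simulation.

Section Runs.
Context {X U Y : Type} (delta : X -> U -> Y -> X -> Prop) (X0 : X -> Prop).

Local Notation Q := (QM delta X0).

Definition run (x : X) (mu : nat -> U) (nu : nat -> Y) (xi : nat -> X) : Prop :=
  xi O = x /\ forall k, delta (xi k) (mu k) (nu k) (xi (S k)).

Lemma run_of_full_beh mu nu xi (t : nat) : full_beh Q mu nu xi ->
  run (xi t) (fun i => mu (t + i)%nat) (fun i => nu (t + i)%nat) (fun i => xi (t + i)%nat).
Proof.
  intros [_ Hstep]. split; [f_equal; lia|].
  intro k. rewrite Nat.add_succ_r. apply Hstep.
Qed.

Lemma run_head x mu nu xi : run x mu nu xi -> delta x (mu O) (nu O) (xi 1%nat).
Proof. intros [<- Hstep]. apply Hstep. Qed.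

Lemma run_tail x mu nu xi : run x mu nu xi ->
  run (xi 1%nat) (fun i => mu (S i)) (fun i => nu (S i)) (fun i => xi (S i)).
Proof. intros [_ Hstep]. split; [reflexivity|]. intro k. apply Hstep. Qed.

Lemma run_cons x u y x' mu nu xi : delta x u y x' -> run x' mu nu xi ->
  run x (scons u mu) (scons y nu) (scons x xi).
Proof. intros Hd [H0 Hstep]. split; [reflexivity|]. intros [|k]; simpl; [rewrite H0|]; auto. Qed.

Lemma Td_iff x a : Td delta x a <-> exists u y, delta x u y a.
Proof.
  split; [intros (u & y & _ & H); eauto|].
  intros (u & y & H). exists u, y. split; [exists u, a|]; exact H.
Qed.

Lemma beh_signal mu nu xi : full_beh Q mu nu xi -> beh Q (signal nu).
Proof.
  intro H. exists mu, nu, xi. split; [exact H|]. split; intros k Hk.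
  - apply signal_neg. exact Hk.
  - apply signal_nonneg, Hk.
Qed.

Lemma beh_inv w : beh Q w -> exists mu nu xi, full_beh Q mu nu xi /\ forall t, w t = signal nu t.
Proof.
  intros (mu & nu & xi & Hb & Hneg & Hpos). exists mu, nu, xi. split; [exact Hb|].
  intro t. destruct (Z.ltb_spec t 0) as [Ht|Ht].
  - rewrite signal_neg by exact Ht. apply Hneg, Ht.
  - rewrite Hpos, signal_nonneg by exact Ht. reflexivity.
Qed.

Lemma Pi_beh_iff (n : nat) s : Pi (Z.of_nat n + 1) (beh Q) s <->
  exists mu nu xi (k : nat), full_beh Q mu nu xi /\
    s = tabulate (fun i => signal nu (Z.of_nat k - Z.of_nat n + Z.of_nat i)%Z) (S n).
Proof.
  split.
  - intros (w & Hw & k & ->). destruct (beh_inv w Hw) as (mu & nu & xi & Hb & Hsig).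
    exists mu, nu, xi, k. split; [exact Hb|].
    replace (Z.of_nat k - (Z.of_nat n + 1) + 1)%Z with (Z.of_nat k - Z.of_nat n)%Z by lia.
    rewrite sigR_window. apply tabulate_ext. intros. apply Hsig.
  - intros (mu & nu & xi & k & Hb & ->). exists (signal nu). split; [exact (beh_signal _ _ _ Hb)|].
    exists k. replace (Z.of_nat k - (Z.of_nat n + 1) + 1)%Z with (Z.of_nat k - Z.of_nat n)%Z by lia.
    rewrite sigR_window. reflexivity.
Qed.

Lemma E_Pi x (n : nat) s : E delta X0 0 (Z.of_nat n) x s -> Pi (Z.of_nat n + 1) (beh Q) s.
Proof.
  intros (w & xis & (mu & nu & xi & Hb & Hw) & k & _ & ->).
  exists w. split; [exists mu, nu, xi; split; [exact Hb|split; intros t Ht; apply Hw, Ht]|].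
  exists (k + n)%nat. f_equal; lia.
Qed.

Hypothesis live : live_reach Q.

Lemma run_exists x : exists mu nu xi, run x mu nu xi.
Proof.
  destruct (proj2 live x I) as (mu & nu & xi & k & Hb & <-).
  exists (fun i => mu (k + i)%nat), (fun i => nu (k + i)%nat), (fun i => xi (k + i)%nat).
  apply run_of_full_beh, Hb.
Qed.

Lemma run_embed x mu nu xi : run x mu nu xi ->
  exists mu' nu' xi' (t : nat), full_beh Q mu' nu' xi' /\ xi' t = x /\
    forall i, nu' (t + i)%nat = nu i.
Proof.
  intros [Hx Hstep]. destruct (proj2 live x I) as (mu0 & nu0 & xi0 & t & [Hinit Hstep0] & Ht).
  pose (glue := fun (A : Type) (f0 f : nat -> A) i => if (i <? t)%nat then f0 i else f (i - t)%nat).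
  exists (glue _ mu0 mu), (glue _ nu0 nu), (glue _ xi0 xi), t. unfold glue.
  split; [split|split].
  - simpl. destruct (Nat.ltb_spec 0 t); [exact Hinit|].
    replace t with 0%nat in Ht by lia. simpl. rewrite Hx, <- Ht. exact Hinit.
  - intro i. destruct (Nat.ltb_spec i t), (Nat.ltb_spec (S i) t); try lia.
    + apply Hstep0.
    + replace (S i - t)%nat with O by lia. replace t with (S i) in Ht by lia.
      rewrite Hx, <- Ht. apply Hstep0.
    + replace (S i - t)%nat with (S (i - t)) by lia. apply Hstep.
  - destruct (Nat.ltb_spec t t); [lia|]. rewrite Nat.sub_diag. exact Hx.
  - intro i. destruct (Nat.ltb_spec (t + i) t); [lia|]. f_equal. lia.
Qed.

Lemma E_zero_iff (b : Z) x s : E delta X0 0 b x s <->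
  exists mu nu xi, run x mu nu xi /\ s = tabulate (fun i => Some (nu i)) (Z.to_nat (b + 1)).
Proof.
  split.
  - intros (w & xis & (mu & nu & xi & Hb & Hneg & Hpos) & k & Hk & ->).
    destruct (Hpos (Z.of_nat k)) as [_ Hxk]; [lia|]. rewrite Hk, Nat2Z.id in Hxk. injection Hxk as ->.
    exists (fun i => mu (k + i)%nat), (fun i => nu (k + i)%nat), (fun i => xi (k + i)%nat).
    split; [apply run_of_full_beh, Hb|]. unfold sigR.
    replace (Z.of_nat k + b - (Z.of_nat k + 0) + 1)%Z with (b + 1)%Z by lia.
    apply tabulate_ext. intros i _.
    rewrite (proj1 (Hpos (Z.of_nat k + 0 + Z.of_nat i)%Z ltac:(lia))).
    do 2 f_equal. lia.
  - intros (mu & nu & xi & Hr & ->).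
    destruct (run_embed x mu nu xi Hr) as (mu' & nu' & xi' & t & Hb & Ht & Hnu).
    exists (signal nu'), (signal xi'). split.
    + exists mu', nu', xi'. split; [exact Hb|]. split; intros k Hk.
      * rewrite !signal_neg by exact Hk. split; reflexivity.
      * rewrite !signal_nonneg by exact Hk. split; reflexivity.
    + exists t. rewrite signal_nat, Ht. split; [reflexivity|]. unfold sigR.
      replace (Z.of_nat t + b - (Z.of_nat t + 0) + 1)%Z with (b + 1)%Z by lia.
      symmetry. apply tabulate_ext. intros i _.
      rewrite Z.add_0_r, <- Nat2Z.inj_add, signal_nat, Hnu. reflexivity.
Qed.

Lemma Pi_E (n : nat) s : Pi (Z.of_nat n + 1) (beh Q) s -> hd None s <> None ->
  exists p, E delta X0 0 (Z.of_nat n) p s.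
Proof.
  intros HPi Hhd. apply Pi_beh_iff in HPi. destruct HPi as (mu & nu & xi & k & Hb & ->).
  rewrite tabulate_succ in Hhd. simpl in Hhd.
  assert (Hkn : (n <= k)%nat).
  { destruct (Nat.leb_spec n k); [assumption|]. rewrite signal_neg in Hhd by lia. congruence. }
  exists (xi (k - n)%nat). apply E_zero_iff.
  eexists; eexists; eexists. split; [apply (run_of_full_beh mu nu xi (k - n)), Hb|].
  replace (Z.to_nat (Z.of_nat n + 1)) with (S n) by lia. apply tabulate_ext. intros i _.
  replace (Z.of_nat k - Z.of_nat n + Z.of_nat i)%Z with (Z.of_nat (k - n + i)) by lia.
  apply signal_nat.
Qed.

Lemma Pi_initial (n : nat) s : Pi (Z.of_nat n + 1) (beh Q) (None :: s) -> hd None s <> None ->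
  exists mu nu xi, full_beh Q mu nu xi /\ s = tabulate (fun i => Some (nu i)) n.
Proof.
  intros HPi Hhd. apply Pi_beh_iff in HPi. destruct HPi as (mu & nu & xi & k & Hb & Hs).
  rewrite tabulate_succ in Hs. injection Hs as Hneg ->.
  exists mu, nu, xi. split; [exact Hb|].
  (* A leading [None] followed by a letter pins the window to start at time -1. *)
  assert (Hkn : (k + 1 = n)%nat).
  { destruct (Nat.leb_spec n k).
    { rewrite Z.add_0_r in Hneg.
      replace (Z.of_nat k - Z.of_nat n)%Z with (Z.of_nat (k - n)) in Hneg by lia.
      rewrite signal_nat in Hneg. discriminate. }
    destruct n as [|n]; [lia|]. rewrite tabulate_succ in Hhd. simpl in Hhd.
    destruct (Nat.eqb_spec (k + 1) (S n)); [lia|]. rewrite signal_neg in Hhd by lia. congruence. }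
  apply tabulate_ext. intros i _. rewrite Zpos_P_of_succ_nat.
  replace (Z.of_nat k - Z.of_nat n + Z.succ (Z.of_nat i))%Z with (Z.of_nat i) by lia.
  apply signal_nat.
Qed.

End Runs.

Section Partitions.
Context {X U Y : Type} (delta : X -> U -> Y -> X -> Prop).

(* The equivalence whose classes are the cells of [Phi^(n+1)]. *)
Fixpoint phi_equiv (n : nat) (x z : X) : Prop :=
  match n with
  | O => forall y, Hd delta x y <-> Hd delta z y
  | S m => phi_equiv m x z /\
           forall x', Tinv delta (phi_equiv m x') x <-> Tinv delta (phi_equiv m x') z
  end.

Lemma phi_equiv_refl n x : phi_equiv n x x.
Proof. induction n as [|n IH]; simpl; [tauto|split; [exact IH|tauto]]. Qed.

Lemma phi_equiv_sym n x z : phi_equiv n x z -> phi_equiv n z x.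
Proof.
  revert x z. induction n as [|n IH]; simpl; intros x z H; [intro y; symmetry; apply H|].
  destruct H as [H1 H2]. split; [apply IH, H1|]. intro x'. symmetry. apply H2.
Qed.

Lemma phi_equiv_trans n x y z : phi_equiv n x y -> phi_equiv n y z -> phi_equiv n x z.
Proof.
  revert x y z. induction n as [|n IH]; simpl; intros x y z H1 H2.
  - intro v. rewrite H1. apply H2.
  - split; [exact (IH _ _ _ (proj1 H1) (proj1 H2))|]. intro x'. rewrite (proj2 H1). apply H2.
Qed.

Lemma Tinv_ext (A B : X -> Prop) x : (forall y, A y <-> B y) -> Tinv delta A x <-> Tinv delta B x.
Proof. intro H. unfold Tinv. split; intros (a & Ha & HA); exists a; split; firstorder. Qed.

Lemma pred_ext (A B : X -> Prop) : (forall y, A y <-> B y) -> A = B.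
Proof. intro H. apply functional_extensionality. intro y. apply propositional_extensionality, H. Qed.

Lemma decided_iff (c : bool) (P Q : Prop) :
  (if c then P else ~ P) -> ((if c then Q else ~ Q) <-> (Q <-> P)).
Proof. destruct c; tauto. Qed.

Lemma PhiS_0_classes Xi : PhiS delta 0 Xi <-> exists x0, Xi = phi_equiv 0 x0.
Proof.
  simpl. split.
  - intros [[x0 Hx0] [V HV]]. exists x0. apply pred_ext. intro y. rewrite (HV y).
    assert (H0 := proj1 (HV x0) Hx0). split; intros H v; [rewrite H0, H|rewrite <- H0, H]; tauto.
  - intros [x0 ->]. split; [exists x0; apply (phi_equiv_refl 0)|].
    exists (Hd delta x0). intro x. simpl. split; intros H v; rewrite H; tauto.
Qed.

Section Succ.
Variable n : nat.
Hypothesis IH : forall Xi, PhiS delta n Xi <-> exists x0, Xi = phi_equiv n x0.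

Lemma forall_PhiS_iff (P : (X -> Prop) -> Prop) :
  (forall Xi, PhiS delta n Xi -> P Xi) <-> (forall x', P (phi_equiv n x')).
Proof.
  split; [intros H x'; apply H, IH; eauto|].
  intros H Xi HXi. apply IH in HXi. destruct HXi as [x' ->]. apply H.
Qed.

Lemma PhiS_S_classes Xi : PhiS delta (S n) Xi <-> exists x0, Xi = phi_equiv (S n) x0.
Proof.
  simpl. setoid_rewrite forall_PhiS_iff. split.
  - intros [[x0 Hx0] [Xi0 [HXi0 [c Hc]]]]. exists x0. apply IH in HXi0. destruct HXi0 as [w0 ->].
    destruct (proj1 (Hc x0) Hx0) as [Hw0 Hcx0].
    apply pred_ext. intro y. rewrite Hc. simpl. split.
    + intros [Hy Hcy]. split; [exact (phi_equiv_trans _ _ _ _ (phi_equiv_sym _ _ _ Hw0) Hy)|].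
      intro x'. symmetry. apply (decided_iff _ _ _ (Hcx0 x')), Hcy.
    + intros [Hy HT]. split; [exact (phi_equiv_trans _ _ _ _ Hw0 Hy)|].
      intro x'. apply (decided_iff _ _ _ (Hcx0 x')). symmetry. apply HT.
  - intros [x0 ->]. split; [exists x0; apply (phi_equiv_refl (S n))|].
    exists (phi_equiv n x0). split; [apply IH; eauto|].
    pose (c Xi' := if excluded_middle_informative (Tinv delta Xi' x0) then true else false).
    exists c.
    assert (Hc0 : forall x', if c (phi_equiv n x') then Tinv delta (phi_equiv n x') x0
                             else ~ Tinv delta (phi_equiv n x') x0).
    { intro x'. unfold c. destruct (excluded_middle_informative _); assumption. }
    intro y. simpl. split.
    + intros [Hy HT]. split; [exact Hy|].
      intro x'. apply (decided_iff _ _ _ (Hc0 x')). symmetry. apply HT.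
    + intros [Hy Hcy]. split; [exact Hy|]. intro x'. symmetry. apply (decided_iff _ _ _ (Hc0 x')), Hcy.
Qed.

End Succ.

Lemma PhiS_classes n Xi : PhiS delta n Xi <-> exists x0, Xi = phi_equiv n x0.
Proof.
  revert Xi. induction n as [|n IH]; [exact PhiS_0_classes|]. exact (PhiS_S_classes n IH).
Qed.

Lemma PhiS_S_stable_iff m : (forall Xi, PhiS delta (S m) Xi <-> PhiS delta m Xi) <->
  (forall x z, phi_equiv m x z -> phi_equiv (S m) x z).
Proof.
  setoid_rewrite PhiS_classes. split.
  - intros H x z Hxz. destruct (proj2 (H (phi_equiv m x)) (ex_intro _ x eq_refl)) as [x0 Hx0].
    assert (Hx : phi_equiv (S m) x0 x) by (rewrite <- Hx0; apply phi_equiv_refl).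
    assert (Hz : phi_equiv (S m) x0 z) by (rewrite <- Hx0; exact Hxz).
    exact (phi_equiv_trans _ _ _ _ (phi_equiv_sym _ _ _ Hx) Hz).
  - intros H Xi. enough (Heq : forall x0, phi_equiv (S m) x0 = phi_equiv m x0)
      by (setoid_rewrite Heq; reflexivity).
    intro x0. apply pred_ext. intro y. split; [apply proj1|apply H].
Qed.

End Partitions.

Section Future.
Context {X U Y : Type} (delta : X -> U -> Y -> X -> Prop) (X0 : X -> Prop) (l : nat).
Hypothesis live : live_reach (QM delta X0).
Hypothesis l_pos : (1 <= l)%nat.
Hypothesis unique : future_unique delta X0 l l.

Local Notation Q := (QM delta X0).
Local Notation EI := (EI delta X0 l l).

Lemma EI_iff_run x s : EI x s <->
  exists mu nu xi, run delta x mu nu xi /\ s = tabulate (fun i => Some (nu i)) l.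
Proof.
  unfold Defs.EI. rewrite Z.sub_diag, E_zero_iff by exact live.
  replace (Z.to_nat (Z.of_nat l - 1 + 1)) with l by lia. reflexivity.
Qed.

Lemma runs_agree x mu nu xi mu' nu' xi' : run delta x mu nu xi -> run delta x mu' nu' xi' ->
  forall i, (i < l)%nat -> nu i = nu' i.
Proof.
  intros Hr Hr' i Hi.
  assert (HE : forall mu nu xi, run delta x mu nu xi -> EI x (tabulate (fun i => Some (nu i)) l))
    by (intros mu0 nu0 xi0 H; apply EI_iff_run; eauto).
  assert (Heq := unique x _ _ (HE _ _ _ Hr) (HE _ _ _ Hr')).
  rewrite Z.sub_diag, !strR_0, !firstn_tabulate in Heq by lia.
  apply tabulate_inj with (i := i) in Heq; [congruence|lia].
Qed.

Lemma outputs_exist x : exists nu, exists mu xi, run delta x mu nu xi.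
Proof. destruct (run_exists delta X0 live x) as (mu & nu & xi & Hr). eauto. Qed.

(* The output sequence of a chosen run from [x]; only its first [l] letters are canonical. *)
Definition future (x : X) : nat -> Y :=
  proj1_sig (constructive_indefinite_description _ (outputs_exist x)).

Lemma future_spec x : exists mu xi, run delta x mu (future x) xi.
Proof. exact (proj2_sig (constructive_indefinite_description _ (outputs_exist x))). Qed.

Lemma run_future x mu nu xi : run delta x mu nu xi -> forall i, (i < l)%nat -> nu i = future x i.
Proof.
  intro Hr. destruct (future_spec x) as (mu' & xi' & Hr'). exact (runs_agree _ _ _ _ _ _ _ Hr Hr').
Qed.

Definition lfuture (x : X) : list (option Y) := tabulate (fun i => Some (future x i)) l.

Lemma lfuture_of_run x mu nu xi : run delta x mu nu xi -> lfuture x = tabulate (fun i => Some (nu i)) l.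
Proof. intro Hr. apply tabulate_ext. intros i Hi. rewrite (run_future _ _ _ _ Hr i Hi). reflexivity. Qed.

Lemma EI_iff x s : EI x s <-> s = lfuture x.
Proof.
  rewrite EI_iff_run. split.
  - intros (mu & nu & xi & Hr & ->). symmetry. exact (lfuture_of_run _ _ _ _ Hr).
  - intros ->. destruct (future_spec x) as (mu & xi & Hr). eauto.
Qed.

Lemma EI_singleton x : EI x = (fun s => s = lfuture x).
Proof. apply functional_extensionality. intro s. apply propositional_extensionality, EI_iff. Qed.

Lemma EI_lfuture x : EI x (lfuture x).
Proof. apply EI_iff. reflexivity. Qed.

Lemma EI_eq_iff x z : EI x = EI z <-> lfuture x = lfuture z.
Proof.
  rewrite !EI_singleton. split; [|intros ->; reflexivity].
  intro H. apply (f_equal (fun P => P (lfuture z))) in H. cbv beta in H.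
  symmetry. rewrite H. reflexivity.
Qed.

Lemma lfuture_eq_iff x z : lfuture x = lfuture z <-> forall i, (i < l)%nat -> future x i = future z i.
Proof.
  split; [intros H i Hi; apply tabulate_inj with (i := i) in H; congruence|].
  intro H. apply tabulate_ext. intros i Hi. rewrite H by exact Hi. reflexivity.
Qed.

Lemma future_step x u y a : delta x u y a ->
  future x 0 = y /\ forall i, (S i < l)%nat -> future x (S i) = future a i.
Proof.
  intro Hd. destruct (future_spec a) as (mu & xi & Hr).
  assert (Hc := run_future _ _ _ _ (run_cons delta _ _ _ _ _ _ _ Hd Hr)).
  split; [symmetry; apply (Hc 0%nat); lia|]. intros i Hi. symmetry. exact (Hc (S i) Hi).
Qed.

Lemma lfuture_step x u y a : delta x u y a -> lfuture x = Some y :: firstn (l - 1) (lfuture a).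
Proof.
  intro Hd. destruct (future_step _ _ _ _ Hd) as [H0 HS].
  unfold lfuture. rewrite tabulate_shift by exact l_pos. rewrite H0. f_equal.
  rewrite !firstn_tabulate by lia. apply tabulate_ext. intros i Hi. rewrite HS by lia. reflexivity.
Qed.

Lemma Hd_iff x y : Hd delta x y <-> y = future x 0.
Proof.
  split.
  - intros (u & a & Hd). symmetry. apply (future_step _ _ _ _ Hd).
  - intros ->. destruct (future_spec x) as (mu & xi & Hr).
    exists (mu 0%nat), (xi 1%nat). apply run_head, Hr.
Qed.

Lemma exists_successor x : exists a, Td delta x a.
Proof.
  destruct (future_spec x) as (mu & xi & Hr). exists (xi 1%nat).
  apply Td_iff. do 2 eexists. apply run_head, Hr.
Qed.

Lemma E_next_iff x s : E delta X0 0 (Z.of_nat l) x s <->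
  exists u y a, delta x u y a /\ s = Some y :: lfuture a.
Proof.
  rewrite E_zero_iff by exact live. replace (Z.to_nat (Z.of_nat l + 1)) with (S l) by lia. split.
  - intros (mu & nu & xi & Hr & ->). exists (mu 0%nat), (nu 0%nat), (xi 1%nat).
    split; [apply run_head, Hr|]. rewrite tabulate_succ. f_equal.
    symmetry. exact (lfuture_of_run _ _ _ _ (run_tail delta _ _ _ _ Hr)).
  - intros (u & y & a & Hd & ->). destruct (future_spec a) as (mu & xi & Hr).
    exists (scons u mu), (scons y (future a)), (scons x xi).
    split; [exact (run_cons delta _ _ _ _ _ _ _ Hd Hr)|]. rewrite tabulate_succ. reflexivity.
Qed.

Lemma firstn_next x u y a : delta x u y a -> firstn l (Some y :: lfuture a) = lfuture x.
Proof.
  intro Hd. rewrite (lfuture_step _ _ _ _ Hd). destruct l as [|m]; [lia|].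
  simpl. rewrite Nat.sub_0_r. reflexivity.
Qed.

(** * The abstract and the quotient machine *)

Local Notation hatQ := (hatQ delta X0 l l).
Local Notation quotQ := (quotQ delta X0 l).
Local Notation Rrel := (Rrel delta X0 l).

Lemma htrans_lfuture x u y a : delta x u y a -> htrans delta X0 l l (lfuture x) u y (lfuture a).
Proof.
  intro Hd. unfold htrans. cbv zeta. rewrite Z.sub_diag. split; [reflexivity|split].
  - rewrite !strR_0. replace (Z.to_nat (Z.of_nat l - 1 + 1)) with l by lia.
    replace (Z.to_nat (Z.of_nat l - 2 + 1)) with (l - 1)%nat by lia.
    rewrite (lfuture_step _ _ _ _ Hd). reflexivity.
  - exists x, a. split; [|split]; [apply EI_lfuture..|exact Hd].
Qed.

Lemma Rrel_lfuture x : Rrel (lfuture x) (EI x).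
Proof.
  split; [exists x; apply EI_lfuture|]. split; [exists x; reflexivity|]. apply EI_singleton.
Qed.

Lemma Rrel_inv s V : Rrel s V -> exists x, s = lfuture x /\ V = EI x.
Proof.
  intros ((x & Hx) & _ & ->). apply EI_iff in Hx. exists x. split; [exact Hx|].
  rewrite EI_singleton, Hx. reflexivity.
Qed.

Lemma Rl_iff x s : Rl delta X0 l x s <-> s = lfuture x.
Proof.
  unfold Rl. rewrite EI_iff. split; [tauto|]. intros ->. split; [exists x; apply EI_lfuture|reflexivity].
Qed.

Lemma Rq_iff x V : Rq delta X0 l x V <-> V = EI x.
Proof. unfold Rq. split; [tauto|]. intros ->. split; [exists x|]; reflexivity. Qed.

Lemma hatQ_sim_quotQ : sim hatQ quotQ Rrel.
Proof.
  split.
  - intros s (x & Hx & Hs). apply EI_iff in Hs as ->. exists (EI x).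
    split; [exists x; split; [exact Hx|reflexivity]|apply Rrel_lfuture].
  - intros s V HR u y s' (_ & _ & x & a & Hs & Hs' & Hd).
    apply EI_iff in Hs as ->. apply EI_iff in Hs' as ->.
    destruct (Rrel_inv _ _ HR) as (z & Hz & ->).
    exists u, y, (EI a). split; [|split; [apply Rrel_lfuture|reflexivity]].
    exists x, a. split; [apply EI_eq_iff; symmetry; exact Hz|split; [reflexivity|exact Hd]].
Qed.

Lemma quotQ_sim_hatQ : sim quotQ hatQ (fun V s => Rrel s V).
Proof.
  split.
  - intros V (x & Hx & ->). exists (lfuture x).
    split; [exists x; split; [exact Hx|apply EI_lfuture]|apply Rrel_lfuture].
  - intros V s HR u y V' (x & a & HV & -> & Hd).
    destruct (Rrel_inv _ _ HR) as (z & -> & Hz). rewrite HV in Hz. apply EI_eq_iff in Hz.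
    exists u, y, (lfuture a). split; [|split; [apply Rrel_lfuture|reflexivity]].
    rewrite <- Hz. apply htrans_lfuture, Hd.
Qed.

Lemma Rrel_then_Rl x V : (exists s, Rrel s V /\ Rl delta X0 l x s) <-> Rq delta X0 l x V.
Proof.
  rewrite Rq_iff. split.
  - intros (s & HR & Hs). apply Rl_iff in Hs as ->.
    destruct (Rrel_inv _ _ HR) as (z & Hz & ->). apply EI_eq_iff. symmetry. exact Hz.
  - intros ->. exists (lfuture x). split; [apply Rrel_lfuture|apply Rl_iff; reflexivity].
Qed.

Lemma Rrel_then_Rq x s : (exists V, Rrel s V /\ Rq delta X0 l x V) <-> Rl delta X0 l x s.
Proof.
  rewrite Rl_iff. split.
  - intros (V & HR & HV). apply Rq_iff in HV as ->.
    destruct (Rrel_inv _ _ HR) as (z & -> & Hz). apply EI_eq_iff. symmetry. exact Hz.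
  - intros ->. exists (EI x). split; [apply Rrel_lfuture|apply Rq_iff; reflexivity].
Qed.

Lemma sim_hatQ_Q_iff_sim_quotQ_Q :
  sim hatQ Q (fun s x => Rl delta X0 l x s) <-> sim quotQ Q (fun V x => Rq delta X0 l x V).
Proof.
  split; intro Hsim.
  - apply (sim_rel_ext _ _ _ _ (fun V x => Rrel_then_Rl x V)).
    exact (sim_comp _ _ _ _ _ quotQ_sim_hatQ Hsim).
  - apply (sim_rel_ext _ _ _ _ (fun s x => Rrel_then_Rq x s)).
    exact (sim_comp _ _ _ _ _ hatQ_sim_quotQ Hsim).
Qed.

(** * Behaviours of the quotient machine *)

Lemma quot_outputs mu nu Vs : full_beh quotQ mu nu Vs ->
  forall i j z, (i < l)%nat -> Vs j = EI z -> future z i = nu (j + i)%nat.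
Proof.
  intros [_ Hstep] i. induction i as [|i IH]; intros j z Hi Hz;
    destruct (Hstep j) as (x & a & Hx & Ha & Hd); rewrite Hz in Hx;
    rewrite EI_eq_iff, lfuture_eq_iff in Hx; rewrite Hx by lia;
    destruct (future_step _ _ _ _ Hd) as [H0 HS].
  - rewrite Nat.add_0_r. exact H0.
  - rewrite HS, (IH (S j) a) by (lia || exact Ha). f_equal. lia.
Qed.

Lemma beh_quotQ_SAlCA w : beh quotQ w -> SAlCA delta X0 l w.
Proof.
  intros (mu & nu & Vs & Hb & Hneg & Hpos).
  destruct (proj1 Hb) as (x0 & Hx0 & HV0).
  destruct (proj1 live x0 Hx0) as (mu' & nu' & xi' & Hb' & Hxi0).
  assert (Hw : forall t, (t < Z.of_nat l)%Z -> w t = signal nu' t).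
  { intro t. destruct (Z.ltb_spec t 0) as [Ht|Ht]; intro Htl.
    - rewrite signal_neg by exact Ht. apply Hneg, Ht.
    - rewrite Hpos, signal_nonneg by exact Ht. f_equal.
      assert (Hr := run_of_full_beh delta X0 _ _ _ 0 Hb'). simpl in Hr. rewrite Hxi0 in Hr.
      rewrite (run_future _ _ _ _ Hr) by lia. symmetry.
      exact (quot_outputs _ _ _ Hb (Z.to_nat t) 0 x0 ltac:(lia) HV0). }
  split; [exact Hneg|split; [intros k Hk; eexists; apply Hpos, Hk|split]].
  - exists (signal nu'). split; [exact (beh_signal _ _ _ _ _ Hb')|].
    rewrite <- (Z.sub_0_l (Z.of_nat l)), !sigR_window. apply tabulate_ext. intros i Hi. apply Hw. lia.
  - intro k. destruct (Nat.ltb_spec k l) as [Hk|Hk].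
    + apply Pi_beh_iff. exists mu', nu', xi', k. split; [exact Hb'|].
      rewrite sigR_window. apply tabulate_ext. intros i Hi. apply Hw. lia.
    + destruct (proj2 Hb (k - l)%nat) as (x & a & Hx & Ha & Hd).
      apply (E_Pi _ _ x). apply E_next_iff. exists (mu (k - l)%nat), (nu (k - l)%nat), a.
      split; [exact Hd|]. rewrite sigR_window, tabulate_succ. f_equal.
      * rewrite Z.add_0_r, Hpos by lia. do 2 f_equal. lia.
      * apply tabulate_ext. intros i Hi. rewrite Hpos by lia.
        rewrite (quot_outputs _ _ _ Hb i (S (k - l)) a Hi Ha). do 2 f_equal. lia.
Qed.

Definition window (ys : nat -> Y) (k n : nat) : list (option Y) :=
  tabulate (fun i => Some (ys (k + i)%nat)) n.

Lemma window_initial w ys : (forall t, (t < 0)%Z -> w t = None) ->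
  (forall k : nat, w (Z.of_nat k) = Some (ys k)) ->
  Pi (Z.of_nat l + 1) (beh Q) (sigR w (Z.of_nat (l - 1) - Z.of_nat l) (Z.of_nat (l - 1))) ->
  exists x0, X0 x0 /\ lfuture x0 = window ys 0 l.
Proof.
  intros Hneg Hys HPi. replace (sigR w _ _) with (None :: window ys 0 l) in HPi.
  2:{ rewrite sigR_window, tabulate_succ. f_equal; [symmetry; apply Hneg; lia|].
      apply tabulate_ext. intros i _.
      replace (Z.of_nat (l - 1) - Z.of_nat l + Z.of_nat (S i))%Z with (Z.of_nat i) by lia.
      rewrite Hys. reflexivity. }
  destruct (Pi_initial delta X0 l _ HPi) as (mu & nu & xi & Hb & ->).
  { unfold window. rewrite hd_tabulate by exact l_pos. discriminate. }
  exists (xi 0%nat). split; [exact (proj1 Hb)|].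
  exact (lfuture_of_run _ _ _ _ (run_of_full_beh delta X0 _ _ _ 0 Hb)).
Qed.

Lemma window_step w ys (k : nat) : (forall k : nat, w (Z.of_nat k) = Some (ys k)) ->
  Pi (Z.of_nat l + 1) (beh Q) (sigR w (Z.of_nat (k + l) - Z.of_nat l) (Z.of_nat (k + l))) ->
  exists u p a, delta p u (ys k) a /\ lfuture p = window ys k l /\ lfuture a = window ys (S k) l.
Proof.
  intros Hys HPi. replace (sigR w _ _) with (window ys k (S l)) in HPi.
  2:{ rewrite sigR_window. apply tabulate_ext. intros i _.
      replace (Z.of_nat (k + l) - Z.of_nat l + Z.of_nat i)%Z with (Z.of_nat (k + i)) by lia.
      rewrite Hys. reflexivity. }
  assert (Hnext : window ys k (S l) = Some (ys k) :: window ys (S k) l).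
  { unfold window. rewrite tabulate_succ, Nat.add_0_r. f_equal.
    apply tabulate_ext. intros i _. do 2 f_equal. lia. }
  destruct (Pi_E delta X0 live l _ HPi) as (p & Hp); [rewrite Hnext; discriminate|].
  apply E_next_iff in Hp. destruct Hp as (u & y & a & Hd & Hwa). rewrite Hnext in Hwa.
  injection Hwa as <- Ha. exists u, p, a. split; [exact Hd|split; [|symmetry; exact Ha]].
  rewrite <- (firstn_next _ _ _ _ Hd), <- Ha, <- Hnext. apply firstn_tabulate. lia.
Qed.

Lemma SAlCA_beh_quotQ w : SAlCA delta X0 l w -> beh quotQ w.
Proof.
  intros (Hneg & Hsome & _ & Hwin).
  destruct (choice (fun (k : nat) y => w (Z.of_nat k) = Some y)) as (ys & Hys).
  { intro k. apply Hsome. lia. }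
  pose (Vs k := fun s => s = window ys k l).
  assert (Htrans : forall k, exists u, qtrans delta X0 l (Vs k) u (ys k) (Vs (S k))).
  { intro k. destruct (window_step w ys k Hys (Hwin (k + l)%nat)) as (u & p & a & Hd & Hp & Ha).
    exists u, p, a. unfold Vs. rewrite !EI_singleton, Hp, Ha. auto. }
  destruct (choice _ Htrans) as (mu & Hmu).
  exists mu, ys, Vs. split; [split; [|exact Hmu]|split; [exact Hneg|]].
  - destruct (window_initial w ys Hneg Hys (Hwin (l - 1)%nat)) as (x0 & Hx0 & Hlf).
    exists x0. split; [exact Hx0|]. unfold Vs. rewrite EI_singleton, Hlf. reflexivity.
  - intros k Hk. rewrite <- Hys, Z2Nat.id by exact Hk. reflexivity.
Qed.

(** * The partitions and asynchronous l-completeness *)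

Definition agree (n : nat) (x z : X) : Prop := forall i, (i <= n)%nat -> future x i = future z i.

Lemma Tinv_agree n x x' : (S n < l)%nat ->
  Tinv delta (agree n x') x <-> forall i, (i <= n)%nat -> future x' i = future x (S i).
Proof.
  intro Hn. split.
  - intros (a & Hxa & Ha) i Hi. apply Td_iff in Hxa. destruct Hxa as (u & y & Hd).
    rewrite Ha, (proj2 (future_step _ _ _ _ Hd)) by lia. reflexivity.
  - intro H. destruct (future_spec x) as (mu & xi & Hr). exists (xi 1%nat).
    split; [apply Td_iff; do 2 eexists; apply run_head, Hr|].
    intros i Hi. rewrite H, (proj2 (future_step _ _ _ _ (run_head _ _ _ _ _ Hr))) by lia. reflexivity.
Qed.

Lemma phi_equiv_agree n : (n < l)%nat -> forall x z, phi_equiv delta n x z <-> agree n x z.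
Proof.
  induction n as [|n IH]; intros Hn x z; simpl.
  - setoid_rewrite Hd_iff. split.
    + intros H i Hi. replace i with 0%nat by lia. apply H. reflexivity.
    + intros H y. rewrite (H 0%nat) by lia. reflexivity.
  - setoid_rewrite (fun x' y => Tinv_ext delta _ (agree n x') y (IH ltac:(lia) x')).
    setoid_rewrite (Tinv_agree n) ; [|lia..]. rewrite IH by lia. split.
    + intros [H0 HS] [|i] Hi; [apply H0; lia|].
      destruct (exists_successor x) as (a & Hxa).
      assert (Ha : forall j, (j <= n)%nat -> future a j = future x (S j)).
      { intros j Hj. apply Td_iff in Hxa. destruct Hxa as (u & y & Hd).
        rewrite (proj2 (future_step _ _ _ _ Hd)) by lia. reflexivity. }
      rewrite <- (Ha i), (proj1 (HS a) Ha i) by lia. reflexivity.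
    + intro H. split; [intros i Hi; apply H; lia|].
      intro x'. split; intros Hx' i Hi; rewrite Hx' by exact Hi; [|symmetry]; apply H; lia.
Qed.

Lemma agree_lfuture_iff x z : agree (l - 1) x z <-> lfuture x = lfuture z.
Proof. rewrite lfuture_eq_iff. split; intros H i Hi; apply H; lia. Qed.

Definition successors_match : Prop := forall x z a, lfuture x = lfuture z -> Td delta x a ->
  exists b, Td delta z b /\ lfuture b = lfuture a.

Lemma Phi_stable_iff : (forall Xi, Phi delta (l + 1) Xi <-> Phi delta l Xi) <-> successors_match.
Proof.
  unfold Phi. replace (Nat.pred (l + 1)) with (S (l - 1)) by lia.
  replace (Nat.pred l) with (l - 1)%nat by lia. rewrite PhiS_S_stable_iff. simpl.
  setoid_rewrite (fun x' y => Tinv_ext delta _ _ y (fun z => phi_equiv_agree (l - 1) ltac:(lia) x' z)).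
  setoid_rewrite (phi_equiv_agree (l - 1)); [|lia..].
  setoid_rewrite (fun x' y => Tinv_ext delta _ _ y (agree_lfuture_iff x')).
  setoid_rewrite agree_lfuture_iff. unfold Tinv. split.
  - intros H x z a Hxz Hxa. destruct (proj1 (proj2 (H x z Hxz) a)) as (b & Hzb & Hab); [exists a; auto|].
    exists b. split; [exact Hzb|symmetry; exact Hab].
  - intros H x z Hxz. split; [exact Hxz|]. intro x'.
    split; intros (a & Ha & Hx'a); [|symmetry in Hxz];
      destruct (H _ _ a Hxz Ha) as (b & Hb & Hba); exists b; (split; [exact Hb|congruence]).
Qed.

Lemma sb_async_complete_iff : sb_async_complete delta X0 l l <-> successors_match.
Proof.
  unfold sb_async_complete. rewrite Z.sub_diag. setoid_rewrite strR_0.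
  replace (Z.to_nat (Z.of_nat l - 1 + 1)) with l by lia. setoid_rewrite EI_iff. split.
  - intros Hsb x z a Hxz Hxa. apply Td_iff in Hxa. destruct Hxa as (u & y & Hd).
    assert (HE : E delta X0 0 (Z.of_nat l) x (Some y :: lfuture a)) by (apply E_next_iff; eauto).
    assert (HEz := Hsb z _ (E_Pi _ _ _ _ _ HE)).
    rewrite firstn_next with (x := x) (u := u) in HEz by exact Hd.
    destruct (proj1 (E_next_iff z _) (HEz Hxz)) as (u' & y' & b & Hb & Hab).
    injection Hab as _ Hab. exists b. split; [apply Td_iff; eauto|symmetry; exact Hab].
  - intros Hmatch x s HPi Hx. destruct (Pi_E delta X0 live l s HPi) as (p & Hp).
    { rewrite <- (hd_firstn s l) by exact l_pos. rewrite Hx. unfold lfuture.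
      rewrite hd_tabulate by exact l_pos. discriminate. }
    apply E_next_iff in Hp. destruct Hp as (u & y & a & Hd & ->).
    rewrite (firstn_next _ _ _ _ Hd) in Hx.
    destruct (Hmatch p x a Hx) as (b & Hxb & Hba); [apply Td_iff; eauto|].
    apply Td_iff in Hxb. destruct Hxb as (u' & y' & Hd').
    apply E_next_iff. exists u', y', b. split; [exact Hd'|]. rewrite Hba. f_equal.
    rewrite <- (proj1 (future_step _ _ _ _ Hd)), <- (proj1 (future_step _ _ _ _ Hd')).
    f_equal. apply (proj1 (lfuture_eq_iff p x) Hx). lia.
Qed.

End Future.

Theorem proposition12 (X U Y : Type) (delta : X -> U -> Y -> X -> Prop) (X0 : X -> Prop)
  (l : nat) :
  standing delta X0 -> (1 <= l)%nat -> future_unique delta X0 l l ->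
  (* (i) *)
  (forall w, beh (quotQ delta X0 l) w <-> SAlCA delta X0 l w) /\
  (* (ii) *)
  (sim (hatQ delta X0 l l) (quotQ delta X0 l) (Rrel delta X0 l) /\
   sim (quotQ delta X0 l) (hatQ delta X0 l l) (fun V s => Rrel delta X0 l s V)) /\
  (* (iii) *)
  (sim (hatQ delta X0 l l) (QM delta X0) (fun s x => Rl delta X0 l x s) <->
   sim (quotQ delta X0 l) (QM delta X0) (fun V x => Rq delta X0 l x V)) /\
  (* (iv) *)
  (sb_async_complete delta X0 l l <->
   (forall Xi, Phi delta (l + 1) Xi <-> Phi delta l Xi)).
Proof.
  intros [live _] l_pos unique.
  split; [|split; [|split]].
  - intro w. split; [apply beh_quotQ_SAlCA | apply SAlCA_beh_quotQ]; assumption.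
  - split; [apply hatQ_sim_quotQ | apply quotQ_sim_hatQ]; assumption.
  - apply sim_hatQ_Q_iff_sim_quotQ_Q; assumption.
  - rewrite (sb_async_complete_iff delta X0 l live l_pos unique),
            (Phi_stable_iff delta X0 l live l_pos unique).
    reflexivity.
Qed.
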